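(* Let $0<q<1$, $n\ge 1$, and let $a_j,b_j$ ($1\le j\le n$) be non-negative integers. Then \[ \zeta\big[a_1+2,\{1\}^{b_1},\dots,a_n+2,\{1\}^{b_n}\big] = \zeta\big[b_n+2,\{1\}^{a_n},\,b_{n-1}+2,\{1\}^{a_{n-1}},\dots,b_1+2,\{1\}^{a_1}\big]. \]
   Context: Fix $0<q<1$. For real $x$, $[x]_q := (1-q^x)/(1-q)$. For positive integers $s_1,\dots,s_N$ with $s_1>1$, $\zeta[s_1,\dots,s_N] := \sum_{k_1>\cdots>k_N>0}\prod_{j=1}^N q^{(s_j-1)k_j}/[k_j]_q^{s_j}$ (sum over positive integers). $\{1\}^b$ denotes $b$ consecutive copies of $1$ in an argument list (empty if $b=0$). *)

From Stdlib Require Import Reals List.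
From Coquelicot Require Import Coquelicot.
Open Scope R_scope.

Definition qint (q x : R) : R := (1 - Rpower q x) / (1 - q).

Definition qterm (q : R) (s k : nat) : R :=
  q ^ ((s - 1) * k) / (qint q (INR k)) ^ s.

(* Truncated nested sum: ztr q [s1;...;sN] M =
   sum over M > k1 > k2 > ... > kN > 0 of prod_j qterm q s_j k_j.
   (ztr q [] M = 1, the empty product.) *)
Fixpoint ztr (q : R) (l : list nat) (M : nat) : R :=
  match l with
  | nil => 1
  | s :: l' =>
      fold_right (fun k acc => qterm q s k * ztr q l' k + acc) 0
        (seq 1 (M - 1))
  end.

Definition qzeta (q : R) (l : list nat) : Rbar :=
  Lim_seq (fun M => ztr q l M).

Definition lhs_args (n : nat) (a b : nat -> nat) : list nat :=
  flat_map (fun j => (a j + 2)%nat :: repeat 1%nat (b j)) (seq 1 n).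

Definition rhs_args (n : nat) (a b : nat -> nat) : list nat :=
  flat_map (fun j => (b j + 2)%nat :: repeat 1%nat (a j)) (rev (seq 1 n)).

From Stdlib Require Import Reals List Lia Lra.
From Coquelicot Require Import Coquelicot.
Open Scope R_scope.

(* Encode an index list s_1, ..., s_N by the word x^{s_1-1} y ... x^{s_N-1} y and
   read x as f n |-> q^n/[n]_q f n and y as f n |-> 1/[n]_q sum_{k<n} f k; the
   truncated zeta sum is then the sum over n < M of the image of the indicator
   of 0 under the word. With the connector
   Phi(m,n) = q^{mn} [m]_q! [n]_q! / [m+n]_q!, the truncated pairing
   Z_M(u,v) = sum_{m,n<M} W_u(m) W_v(n) Phi(m,n) satisfies
   Z_M(xu,v) ~ Z_M(u,yv) and Z_M(yu,v) ~ Z_M(u,xv), the error being bounded by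
   q^{M-1} times a polynomial in M: this is the telescoping identity
   q^m/[m]_q (Phi(m,n) - Phi(m,n+1)) = Phi(m,n+1)/[n+1]_q. Moving the letters of
   w one at a time from the left slot to the right slot, where Z_M(w,{}) and
   Z_M({},w') are truncated zeta sums, shows that zeta(w) = zeta(w') for the
   dual word w' (reversed, with x and y exchanged), and the dual of the word of
   the left-hand side is the word of the right-hand side. *)

Fixpoint sum_lt (f : nat -> R) (n : nat) : R :=
  match n with O => 0 | S n => sum_lt f n + f n end.

Lemma sum_lt_ext f g n : (forall i, (i < n)%nat -> f i = g i) -> sum_lt f n = sum_lt g n.
Proof.
  induction n as [|n IH]; simpl; intros H; [reflexivity|].
  rewrite IH, H; auto with arith.
Qed.

Lemma sum_lt_plus f g n : sum_lt (fun i => f i + g i) n = sum_lt f n + sum_lt g n.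
Proof. induction n; simpl; [lra|rewrite IHn; lra]. Qed.

Lemma sum_lt_minus f g n : sum_lt (fun i => f i - g i) n = sum_lt f n - sum_lt g n.
Proof. induction n; simpl; [lra|rewrite IHn; lra]. Qed.

Lemma sum_lt_mult_l c f n : sum_lt (fun i => c * f i) n = c * sum_lt f n.
Proof. induction n; simpl; [lra|rewrite IHn; lra]. Qed.

Lemma sum_lt_mult_r c f n : sum_lt (fun i => f i * c) n = sum_lt f n * c.
Proof. induction n; simpl; [lra|rewrite IHn; lra]. Qed.

Lemma sum_lt_const c n : sum_lt (fun _ => c) n = INR n * c.
Proof. induction n; [simpl; lra|]. rewrite S_INR; simpl; rewrite IHn; lra. Qed.

Lemma sum_lt_eq_0 f n : (forall i, (i < n)%nat -> f i = 0) -> sum_lt f n = 0.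
Proof. intros H. rewrite (sum_lt_ext f (fun _ => 0)), sum_lt_const by auto. lra. Qed.

Lemma sum_lt_shift f n : sum_lt f (S n) = f O + sum_lt (fun i => f (S i)) n.
Proof. induction n; simpl in *; [lra|]. rewrite IHn. lra. Qed.

Lemma sum_lt_le f g n : (forall i, (i < n)%nat -> f i <= g i) -> sum_lt f n <= sum_lt g n.
Proof.
  induction n as [|n IH]; simpl; intros H; [lra|].
  apply Rplus_le_compat; auto with arith.
Qed.

Lemma sum_lt_nonneg f n : (forall i, (i < n)%nat -> 0 <= f i) -> 0 <= sum_lt f n.
Proof.
  intros H. rewrite <- (sum_lt_eq_0 (fun _ => 0) n) by auto. now apply sum_lt_le.
Qed.

Lemma sum_lt_swap (F : nat -> nat -> R) n m :
  sum_lt (fun i => sum_lt (F i) m) n = sum_lt (fun j => sum_lt (fun i => F i j) n) m.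
Proof.
  induction n as [|n IH]; simpl.
  - symmetry; now apply sum_lt_eq_0.
  - now rewrite IH, <- sum_lt_plus.
Qed.

Lemma sum_lt_triangle (f g : nat -> R) M :
  sum_lt (fun j => g j * sum_lt f j) M
  = sum_lt (fun i => f i * sum_lt (fun j => if Nat.ltb i j then g j else 0) M) M.
Proof.
  induction M as [|M IH]; [reflexivity|].
  cbn [sum_lt]. rewrite IH.
  rewrite (sum_lt_eq_0 (fun j => if Nat.ltb M j then g j else 0)), Nat.ltb_irrefl, !Rplus_0_r, Rmult_0_r, Rplus_0_r.
  2:{ intros j Hj. now replace (Nat.ltb M j) with false by (symmetry; apply Nat.ltb_ge; lia). }
  rewrite (Rmult_comm (g M)), <- sum_lt_mult_r, <- sum_lt_plus. apply sum_lt_ext. intros i Hi.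
  replace (Nat.ltb i M) with true by (symmetry; apply Nat.ltb_lt; lia). ring.
Qed.

Lemma pow_le_1 x k : 0 <= x <= 1 -> 0 <= x ^ k <= 1.
Proof. intros Hx. split; [now apply pow_le|]. rewrite <- (pow1 k). now apply pow_incr. Qed.

Lemma pow_antitone x m n : 0 <= x <= 1 -> (n <= m)%nat -> x ^ m <= x ^ n.
Proof.
  intros Hx Hnm. replace m with (n + (m - n))%nat by lia. rewrite pow_add.
  pose proof (pow_le_1 x (m - n) Hx). pose proof (pow_le_1 x n Hx). nra.
Qed.

Lemma is_lim_seq_pow u (l : R) D : is_lim_seq u l -> is_lim_seq (fun n => u n ^ D) (l ^ D).
Proof.
  intros Hu. induction D as [|D IH]; simpl.
  - apply is_lim_seq_const.
  - now apply (is_lim_seq_mult' u (fun n => u n ^ D)).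
Qed.

Lemma is_lim_seq_geom_poly q D : 0 < q < 1 -> is_lim_seq (fun K => q ^ K * (INR K + 2) ^ D) 0.
Proof.
  intros Hq. set (a := fun K => q ^ K * (INR K + 2) ^ D).
  assert (Hpos : forall K, 0 < a K).
  { intros K. apply Rmult_lt_0_compat; apply pow_lt; [lra|]. pose proof (pos_INR K); lra. }
  assert (Hratio : is_lim_seq (fun K => Rabs (a (S K) / a K)) q).
  { apply is_lim_seq_ext with (fun K => q * (1 + / (INR K + 2)) ^ D).
    - intros K. rewrite Rabs_pos_eq by (apply Rlt_le, Rdiv_lt_0_compat; apply Hpos).
      unfold a. rewrite S_INR. simpl pow.
      assert (0 < INR K + 2) by (pose proof (pos_INR K); lra).
      replace (1 + / (INR K + 2)) with ((INR K + 1 + 2) / (INR K + 2)) by (field; lra).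
      unfold Rdiv. rewrite Rpow_mult_distr, pow_inv. field.
      split; apply pow_nonzero; lra.
    - replace (Finite q) with (Finite (q * (1 + 0) ^ D)) by (f_equal; rewrite Rplus_0_r, pow1; ring).
      apply (is_lim_seq_mult' (fun _ => q)); [apply is_lim_seq_const|].
      apply is_lim_seq_pow, (is_lim_seq_plus' (fun _ => 1)); [apply is_lim_seq_const|].
      replace (Finite 0) with (Rbar_inv p_infty) by reflexivity.
      apply is_lim_seq_inv; [|discriminate].
      apply (is_lim_seq_plus _ _ p_infty 2); [apply is_lim_seq_INR|apply is_lim_seq_const|].
      reflexivity. }
  apply is_lim_seq_abs_0, ex_series_lim_0.
  apply (ex_series_DAlembert a q); [lra| |exact Hratio].
  intros K. apply Rgt_not_eq, Hpos.
Qed.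

Lemma Lim_seq_eq_of_vanishing_diff (u v : nat -> R) :
  ex_lim_seq u -> is_lim_seq (fun M => u M - v M) 0 -> Lim_seq u = Lim_seq v.
Proof.
  intros Hu Hd. apply Lim_seq_correct in Hu. symmetry. apply is_lim_seq_unique.
  apply is_lim_seq_ext with (fun M => u M - (u M - v M)); [intros; ring|].
  apply (is_lim_seq_minus _ _ (Lim_seq u) 0); auto.
  destruct (Lim_seq u); unfold is_Rbar_minus, is_Rbar_plus; simpl; auto.
  do 2 f_equal. ring.
Qed.

Section QDuality.

Variable q : R.
Hypothesis Hq : 0 < q < 1.

Definition qnat (k : nat) : R := qint q (INR k).

Lemma qnat_pow k : qnat k = (1 - q ^ k) / (1 - q).
Proof. unfold qnat, qint. rewrite Rpower_pow; lra. Qed.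

Lemma qnat_0 : qnat 0 = 0.
Proof. rewrite qnat_pow. simpl. field. lra. Qed.

Lemma qnat_add m n : qnat (m + n) = qnat m + q ^ m * qnat n.
Proof. rewrite !qnat_pow, pow_add. field. lra. Qed.

Lemma qnat_ge_1 k : (1 <= k)%nat -> 1 <= qnat k.
Proof.
  intros Hk. rewrite qnat_pow.
  pose proof (pow_antitone q k 1 ltac:(lra) Hk) as Hqk. rewrite pow_1 in Hqk.
  replace 1 with ((1 - q) / (1 - q)) at 1 by (field; lra).
  unfold Rdiv. apply Rmult_le_compat_r; [apply Rlt_le, Rinv_0_lt_compat|]; lra.
Qed.

Lemma qnat_ge_0 k : 0 <= qnat k.
Proof.
  destruct k; [rewrite qnat_0; lra|].
  pose proof (qnat_ge_1 (S k) ltac:(lia)). lra.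
Qed.

Lemma Rinv_qnat_bound k : 0 <= / qnat k <= 1.
Proof.
  destruct k; [rewrite qnat_0, Rinv_0; lra|].
  pose proof (qnat_ge_1 (S k) ltac:(lia)). split.
  - apply Rlt_le, Rinv_0_lt_compat; lra.
  - rewrite <- Rinv_1. apply Rinv_le_contravar; lra.
Qed.

Lemma pow_div_qnat_bound k : 0 <= q ^ k / qnat k <= 1.
Proof.
  pose proof (Rinv_qnat_bound k). pose proof (pow_le_1 q k ltac:(lra)).
  unfold Rdiv. split; [apply Rmult_le_pos|]; nra.
Qed.

Fixpoint qfact (k : nat) : R :=
  match k with O => 1 | S k => qfact k * qnat (S k) end.

Lemma qfact_pos k : 0 < qfact k.
Proof.
  induction k; simpl; [lra|].
  pose proof (qnat_ge_1 (S k) ltac:(lia)). nra.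
Qed.

Lemma qfact_mul_le m n : qfact m * qfact n <= qfact (m + n).
Proof.
  induction n as [|n IH]; [rewrite Nat.add_0_r; simpl; lra|].
  rewrite Nat.add_succ_r. simpl.
  pose proof (qfact_pos m). pose proof (qfact_pos n).
  assert (qnat (S n) <= qnat (S (m + n))).
  { replace (S (m + n)) with (S n + m)%nat by lia. rewrite qnat_add.
    pose proof (qnat_ge_0 m). pose proof (pow_le_1 q (S n) ltac:(lra)). nra. }
  pose proof (qnat_ge_1 (S n) ltac:(lia)).
  apply Rle_trans with (qfact m * qfact n * qnat (S (m + n))).
  - rewrite Rmult_assoc. apply Rmult_le_compat_l; [lra|]. nra.
  - apply Rmult_le_compat_r; lra.
Qed.

Definition connector (m n : nat) : R :=
  q ^ (m * n) * qfact m * qfact n / qfact (m + n).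

Lemma connector_sym m n : connector m n = connector n m.
Proof. unfold connector. rewrite Nat.mul_comm, Nat.add_comm. lra. Qed.

Lemma connector_0_r m : connector m 0 = 1.
Proof.
  unfold connector. rewrite Nat.mul_0_r, Nat.add_0_r. simpl.
  pose proof (qfact_pos m). field. lra.
Qed.

Lemma connector_bound m n : 0 <= connector m n <= q ^ (m * n).
Proof.
  unfold connector.
  pose proof (qfact_pos m). pose proof (qfact_pos n). pose proof (qfact_pos (m + n)).
  pose proof (qfact_mul_le m n). pose proof (pow_le_1 q (m * n) ltac:(lra)).
  assert (qfact m * qfact n / qfact (m + n) <= 1).
  { apply Rmult_le_reg_r with (qfact (m + n)); [lra|]. field_simplify; lra. }
  assert (0 <= qfact m * qfact n / qfact (m + n)).
  { apply Rlt_le, Rdiv_lt_0_compat; nra. }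
  replace (q ^ (m * n) * qfact m * qfact n / qfact (m + n))
    with (q ^ (m * n) * (qfact m * qfact n / qfact (m + n))) by (field; lra).
  split; nra.
Qed.

Lemma connector_step m n : (1 <= m)%nat ->
  q ^ m / qnat m * (connector m n - connector m (S n)) = connector m (S n) / qnat (S n).
Proof.
  intros Hm.
  pose proof (qnat_ge_1 m Hm). pose proof (qnat_ge_1 (S n) ltac:(lia)).
  pose proof (qfact_pos m). pose proof (qfact_pos n). pose proof (qfact_pos (m + n)).
  pose proof (qnat_ge_0 (S n)).
  assert (0 < q ^ m) by (apply pow_lt; lra).
  unfold connector. rewrite Nat.add_succ_r. simpl qfact.
  replace (m * S n)%nat with (m * n + m)%nat by lia. rewrite pow_add.
  replace (S (m + n)) with (m + S n)%nat by lia. rewrite qnat_add.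
  field. repeat split; nra.
Qed.

Lemma connector_telescope m n M : (1 <= m)%nat -> (n < M)%nat ->
  sum_lt (fun j => if Nat.ltb n j then connector m j / qnat j else 0) M
  = q ^ m / qnat m * (connector m n - connector m (M - 1)).
Proof.
  intros Hm. induction M as [|M IH]; intros HnM; [lia|].
  simpl sum_lt. destruct (Nat.eq_dec n M) as [<-|HnM'].
  - rewrite Nat.ltb_irrefl, sum_lt_eq_0.
    + replace (S n - 1)%nat with n by lia. ring.
    + intros j Hj. now replace (Nat.ltb n j) with false by (symmetry; apply Nat.ltb_ge; lia).
  - rewrite IH by lia. replace (Nat.ltb n M) with true by (symmetry; apply Nat.ltb_lt; lia).
    replace (S M - 1)%nat with M by lia.
    pose proof (connector_step m (M - 1) Hm) as Hstep.
    replace (S (M - 1)) with M in Hstep by lia. rewrite <- Hstep. ring.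
Qed.

Lemma connector_tail_bound m K : 0 <= q ^ m / qnat m * connector m K <= q ^ K.
Proof.
  pose proof (connector_bound m K). destruct m as [|m].
  - rewrite qnat_0. unfold Rdiv. rewrite Rinv_0, Rmult_0_r, Rmult_0_l.
    pose proof (pow_le_1 q K ltac:(lra)). lra.
  - pose proof (pow_div_qnat_bound (S m)).
    pose proof (pow_antitone q (S m * K) K ltac:(lra) ltac:(nia)). nra.
Qed.



(* The letters x and y are [true] and [false]. *)
Fixpoint weight (w : list bool) (n : nat) : R :=
  match w with
  | nil => match n with O => 1 | S _ => 0 end
  | true :: w' => q ^ n / qnat n * weight w' n
  | false :: w' => / qnat n * sum_lt (weight w') n
  end.

Lemma weight_nonneg w n : 0 <= weight w n.
Proof.
  revert n; induction w as [|[|] w IH]; intros n; simpl.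
  - destruct n; lra.
  - pose proof (pow_div_qnat_bound n). pose proof (IH n). apply Rmult_le_pos; lra.
  - pose proof (Rinv_qnat_bound n). apply Rmult_le_pos; [lra|]. now apply sum_lt_nonneg.
Qed.

Lemma weight_0 w : w <> nil -> weight w 0 = 0.
Proof.
  intros Hw. destruct w as [|[|] w]; [congruence| |]; simpl.
  - rewrite qnat_0. unfold Rdiv. rewrite Rinv_0. ring.
  - ring.
Qed.

Lemma weight_le w n : weight w n <= (INR n + 1) ^ length w.
Proof.
  revert n; induction w as [|[|] w IH]; intros n; simpl.
  - pose proof (pos_INR n). destruct n; lra.
  - pose proof (pow_div_qnat_bound n). pose proof (IH n). pose proof (weight_nonneg w n).
    pose proof (pos_INR n). pose proof (pow_le (INR n + 1) (length w) ltac:(lra)). nra.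
  - pose proof (Rinv_qnat_bound n). pose proof (pos_INR n).
    assert (sum_lt (weight w) n <= INR n * (INR n + 1) ^ length w).
    { rewrite <- sum_lt_const. apply sum_lt_le. intros i Hi.
      apply Rle_trans with ((INR i + 1) ^ length w); [apply IH|].
      apply lt_INR in Hi. pose proof (pos_INR i). apply pow_incr. lra. }
    assert (0 <= sum_lt (weight w) n) by (apply sum_lt_nonneg; intros; apply weight_nonneg).
    pose proof (pow_le (INR n + 1) (length w) ltac:(lra)). nra.
Qed.

Lemma sum_weight_le w M : sum_lt (weight w) M <= (INR M + 1) ^ S (length w).
Proof.
  pose proof (pos_INR M). rewrite <- tech_pow_Rmult.
  apply Rle_trans with (INR M * (INR M + 1) ^ length w).
  - rewrite <- sum_lt_const. apply sum_lt_le. intros i Hi.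
    apply Rle_trans with ((INR i + 1) ^ length w); [apply weight_le|].
    apply lt_INR in Hi. pose proof (pos_INR i). apply pow_incr. lra.
  - apply Rmult_le_compat_r; [apply pow_le|]; lra.
Qed.

Definition bisum (M : nat) (c : nat -> nat -> R) (u v : list bool) : R :=
  sum_lt (fun m => weight u m * sum_lt (fun n => weight v n * c m n) M) M.

Definition pairing (M : nat) (u v : list bool) : R := bisum M connector u v.

Lemma bisum_sym M c u v : bisum M c u v = bisum M (fun m n => c n m) v u.
Proof.
  unfold bisum.
  rewrite (sum_lt_ext _ (fun m => sum_lt (fun n => weight u m * weight v n * c m n) M))
    by (intros; rewrite <- sum_lt_mult_l; apply sum_lt_ext; intros; ring).
  rewrite sum_lt_swap. apply sum_lt_ext; intros n _.
  rewrite <- sum_lt_mult_l. apply sum_lt_ext; intros; ring.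
Qed.

Lemma pairing_sym M u v : pairing M u v = pairing M v u.
Proof.
  unfold pairing. rewrite bisum_sym. unfold bisum.
  apply sum_lt_ext; intros m _. f_equal. apply sum_lt_ext; intros n _.
  now rewrite connector_sym.
Qed.

Lemma pairing_nil_r M w : pairing M w nil = sum_lt (weight w) M.
Proof.
  unfold pairing, bisum. apply sum_lt_ext; intros m Hm. destruct M as [|M]; [lia|].
  rewrite sum_lt_shift, sum_lt_eq_0 by (intros; simpl; ring).
  simpl weight. rewrite connector_0_r. ring.
Qed.

Lemma pairing_nil_l M w : pairing M nil w = sum_lt (weight w) M.
Proof. now rewrite pairing_sym, pairing_nil_r. Qed.

Lemma bisum_bound M K c u v : (forall m n, 0 <= c m n <= K) ->
  0 <= bisum M c u v <= K * sum_lt (weight u) M * sum_lt (weight v) M.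
Proof.
  intros Hc. unfold bisum. rewrite Rmult_assoc, <- sum_lt_mult_r, <- sum_lt_mult_l.
  split; [apply sum_lt_nonneg | apply sum_lt_le]; intros m _.
  - apply Rmult_le_pos; [apply weight_nonneg|].
    apply sum_lt_nonneg; intros n _. apply Rmult_le_pos; [apply weight_nonneg|apply Hc].
  - rewrite <- Rmult_assoc, (Rmult_comm K), Rmult_assoc. apply Rmult_le_compat_l; [apply weight_nonneg|].
    rewrite <- sum_lt_mult_l. apply sum_lt_le; intros n _.
    pose proof (weight_nonneg v n). pose proof (Hc m n). nra.
Qed.

Lemma bisum_vanish (c : nat -> nat -> nat -> R) u v :
  (forall M m n, 0 <= c M m n <= q ^ (M - 1)) ->
  is_lim_seq (fun M => bisum M (c M) u v) 0.
Proof.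
  intros Hc. apply is_lim_seq_incr_1.
  set (D := (S (length u) + S (length v))%nat).
  apply is_lim_seq_le_le with (fun _ => 0) (fun K => q ^ K * (INR K + 2) ^ D).
  - intros K. destruct (bisum_bound (S K) (q ^ K) (c (S K)) u v) as [H0 H1].
    { intros m n. specialize (Hc (S K) m n). now replace (S K - 1)%nat with K in Hc by lia. }
    split; [exact H0|]. apply Rle_trans with (1 := H1).
    pose proof (sum_weight_le u (S K)). pose proof (sum_weight_le v (S K)).
    assert (0 <= sum_lt (weight u) (S K)) by (apply sum_lt_nonneg; intros; apply weight_nonneg).
    assert (0 <= sum_lt (weight v) (S K)) by (apply sum_lt_nonneg; intros; apply weight_nonneg).
    assert (0 < q ^ K) by (apply pow_lt; lra).
    rewrite S_INR in *. replace (INR K + 1 + 1) with (INR K + 2) in * by ring.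
    unfold D. rewrite pow_add, Rmult_assoc. apply Rmult_le_compat_l; [lra|].
    apply Rmult_le_compat; lra.
  - apply is_lim_seq_const.
  - now apply is_lim_seq_geom_poly.
Qed.

Lemma sum_weight_y_connector v m M : (1 <= m)%nat ->
  sum_lt (fun n => weight (false :: v) n * connector m n) M
  = sum_lt (fun n => weight v n * (q ^ m / qnat m * (connector m n - connector m (M - 1)))) M.
Proof.
  intros Hm. cbn [weight].
  rewrite (sum_lt_ext _ (fun n => connector m n / qnat n * sum_lt (weight v) n))
    by (intros; unfold Rdiv; ring).
  rewrite sum_lt_triangle. apply sum_lt_ext; intros n Hn. now rewrite connector_telescope.
Qed.

Lemma pairing_move_x M u v : u <> nil ->
  pairing M (true :: u) v - pairing M u (false :: v)
  = bisum M (fun m _ => q ^ m / qnat m * connector m (M - 1)) u v.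
Proof.
  intros Hu. unfold pairing, bisum. rewrite <- sum_lt_minus. apply sum_lt_ext; intros m _.
  destruct m as [|m].
  - rewrite (weight_0 (true :: u)), (weight_0 u) by (easy || discriminate). ring.
  - change (weight (true :: u) (S m)) with (q ^ S m / qnat (S m) * weight u (S m)).
    rewrite sum_weight_y_connector by lia.
    set (c := q ^ S m / qnat (S m)).
    rewrite (sum_lt_ext (fun n => weight v n * (c * (connector (S m) n - connector (S m) (M - 1))))
               (fun n => c * (weight v n * connector (S m) n)
                         - weight v n * (c * connector (S m) (M - 1))))
      by (intros; ring).
    rewrite sum_lt_minus, sum_lt_mult_l. ring.
Qed.

Lemma pairing_move_x_lim u v : u <> nil ->
  is_lim_seq (fun M => pairing M (true :: u) v - pairing M u (false :: v)) 0.
Proof.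
  intros Hu. apply is_lim_seq_ext with
    (fun M => bisum M (fun m _ => q ^ m / qnat m * connector m (M - 1)) u v).
  - intros M. now rewrite pairing_move_x.
  - apply (bisum_vanish (fun M m _ => q ^ m / qnat m * connector m (M - 1))).
    intros; apply connector_tail_bound.
Qed.

Lemma pairing_move_y_lim u v : v <> nil ->
  is_lim_seq (fun M => pairing M (false :: u) v - pairing M u (true :: v)) 0.
Proof.
  intros Hv. replace (Finite 0) with (Rbar_opp 0) by (simpl; f_equal; ring).
  apply is_lim_seq_ext with
    (fun M => - (pairing M (true :: v) u - pairing M v (false :: u))).
  - intros M. rewrite (pairing_sym M (true :: v)), (pairing_sym M v). ring.
  - now apply (is_lim_seq_opp _ 0), pairing_move_x_lim.
Qed.

Definition word_dual (w : list bool) : list bool := rev (map negb w).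

(* The side conditions ensure that each x is moved while a letter remains behind it
   and each y is moved onto a nonempty right slot. *)
Lemma pairing_transport u v :
  (u = nil \/ last u true = false) -> (u = nil \/ hd false u = true \/ v <> nil) ->
  is_lim_seq (fun M => pairing M u v - pairing M nil (word_dual u ++ v)) 0.
Proof.
  unfold word_dual. revert v; induction u as [|c u IH]; intros v Hlast Hhead.
  - apply is_lim_seq_ext with (fun _ => 0); [intros; simpl; ring|apply is_lim_seq_const].
  - assert (Hu : u = nil \/ last u true = false).
    { destruct Hlast as [|Hlast]; [discriminate|]. destruct u; auto. }
    replace (Finite 0) with (Finite (0 + 0)) by (f_equal; ring).
    apply is_lim_seq_ext with (fun M => (pairing M (c :: u) v - pairing M u (negb c :: v))
       + (pairing M u (negb c :: v) - pairing M nil (rev (map negb u) ++ negb c :: v))).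
    { intros M. simpl. rewrite <- app_assoc. simpl. ring. }
    apply is_lim_seq_plus'; [|apply IH; [exact Hu | right; right; discriminate]].
    destruct c; simpl negb.
    + apply pairing_move_x_lim. intros ->.
      destruct Hlast as [|Hlast]; [discriminate|]. discriminate.
    + apply pairing_move_y_lim.
      destruct Hhead as [|[|]]; [discriminate|discriminate|assumption].
Qed.

Lemma sum_weight_dual_lim w : hd false w = true -> last w true = false ->
  is_lim_seq (fun M => sum_lt (weight w) M - sum_lt (weight (word_dual w)) M) 0.
Proof.
  intros Hhead Hlast.
  pose proof (pairing_transport w nil (or_intror Hlast) (or_intror (or_introl Hhead))) as T.
  rewrite app_nil_r in T. apply is_lim_seq_ext with (2 := T).
  intros M. now rewrite pairing_nil_r, pairing_nil_l.
Qed.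

End QDuality.

Definition index_word (l : list nat) : list bool :=
  flat_map (fun s => repeat true (s - 1) ++ false :: nil) l.

Lemma fold_right_seq_sum (f : nat -> R) a n :
  fold_right (fun k acc => f k + acc) 0 (seq a n) = sum_lt (fun i => f (a + i)%nat) n.
Proof.
  revert a; induction n as [|n IH]; intros a; [reflexivity|].
  cbn [seq fold_right]. rewrite IH, sum_lt_shift, Nat.add_0_r. f_equal.
  apply sum_lt_ext; intros i _. now rewrite Nat.add_succ_r.
Qed.

Lemma ztr_cons q s l M :
  ztr q (s :: l) M = sum_lt (fun i => qterm q s (S i) * ztr q l (S i)) (M - 1).
Proof. apply (fold_right_seq_sum (fun k => qterm q s k * ztr q l k)). Qed.

Lemma qterm_eq q s k : 0 < q < 1 -> (1 <= s)%nat -> (1 <= k)%nat ->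
  qterm q s k = (q ^ k / qnat q k) ^ (s - 1) / qnat q k.
Proof.
  intros Hq Hs Hk. pose proof (qnat_ge_1 q Hq k Hk).
  unfold qterm. fold (qnat q k). replace s with (S (s - 1)) at 2 by lia.
  rewrite Nat.mul_comm, pow_mult. unfold Rdiv. rewrite Rpow_mult_distr, pow_inv.
  simpl pow. field. split; [|apply pow_nonzero]; lra.
Qed.

Lemma weight_repeat_true q k w n :
  weight q (repeat true k ++ w) n = (q ^ n / qnat q n) ^ k * weight q w n.
Proof. induction k as [|k IH]; simpl; [ring|]. rewrite IH. ring. Qed.

Lemma sum_weight_index_word q l k : 0 < q < 1 -> List.Forall (fun s => (1 <= s)%nat) l ->
  (1 <= k)%nat -> sum_lt (weight q (index_word l)) k = ztr q l k.
Proof.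
  intros Hq Hl. revert k; induction Hl as [|s l Hs Hl IH]; intros k Hk.
  - destruct k as [|k]; [lia|]. rewrite sum_lt_shift, sum_lt_eq_0 by reflexivity. simpl. ring.
  - rewrite ztr_cons. replace k with (S (k - 1)) at 1 by lia.
    unfold index_word; cbn [flat_map]; rewrite <- app_assoc; fold (index_word l).
    rewrite sum_lt_shift, weight_0 by (auto; destruct (s - 1)%nat; discriminate).
    rewrite Rplus_0_l. apply sum_lt_ext; intros i _.
    rewrite weight_repeat_true, qterm_eq by (auto; lia). cbn [app weight].
    rewrite <- IH by lia. simpl sum_lt. unfold Rdiv. ring.
Qed.

Lemma qzeta_weight q l : 0 < q < 1 -> List.Forall (fun s => (1 <= s)%nat) l ->
  qzeta q l = Lim_seq (sum_lt (weight q (index_word l))).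
Proof.
  intros Hq Hl. apply Lim_seq_ext_loc. exists 1%nat; intros k Hk.
  symmetry. now apply sum_weight_index_word.
Qed.

Definition block (a b : nat) : list bool := repeat true (S a) ++ repeat false (S b).

Lemma index_word_ones b : index_word (repeat 1%nat b) = repeat false b.
Proof. induction b as [|b IH]; [reflexivity|]. unfold index_word in *. simpl. now rewrite IH. Qed.

Lemma index_word_block a b : index_word ((a + 2)%nat :: repeat 1%nat b) = block a b.
Proof.
  change (index_word ((a + 2)%nat :: repeat 1%nat b))
    with ((repeat true (a + 2 - 1) ++ false :: nil) ++ index_word (repeat 1%nat b)).
  rewrite index_word_ones, <- app_assoc. now replace (a + 2 - 1)%nat with (S a) by lia.
Qed.

Lemma flat_map_flat_map {A B C} (f : B -> list C) (h : A -> list B) L :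
  flat_map f (flat_map h L) = flat_map (fun j => flat_map f (h j)) L.
Proof. induction L as [|x L IH]; simpl; [reflexivity|]. now rewrite flat_map_app, IH. Qed.

Lemma word_dual_flat_map {A} (f : A -> list bool) L :
  word_dual (flat_map f L) = flat_map (fun j => word_dual (f j)) (rev L).
Proof.
  unfold word_dual. induction L as [|x L IH]; simpl; [reflexivity|].
  rewrite map_app, rev_app_distr, IH, flat_map_app. simpl. now rewrite app_nil_r.
Qed.

Lemma word_dual_block a b : word_dual (block a b) = block b a.
Proof.
  unfold word_dual, block. now rewrite map_app, !map_repeat, rev_app_distr, !rev_repeat.
Qed.

Lemma index_word_lhs n a b :
  index_word (lhs_args n a b) = flat_map (fun j => block (a j) (b j)) (seq 1 n).
Proof.
  unfold lhs_args. rewrite <- (flat_map_ext _ _ (fun j => index_word_block (a j) (b j))).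
  apply flat_map_flat_map.
Qed.

Lemma index_word_rhs n a b :
  index_word (rhs_args n a b) = flat_map (fun j => block (b j) (a j)) (rev (seq 1 n)).
Proof.
  unfold rhs_args. rewrite <- (flat_map_ext _ _ (fun j => index_word_block (b j) (a j))).
  apply flat_map_flat_map.
Qed.

Lemma word_dual_lhs n a b : word_dual (index_word (lhs_args n a b)) = index_word (rhs_args n a b).
Proof.
  rewrite index_word_lhs, index_word_rhs, word_dual_flat_map.
  apply flat_map_ext; intros j. apply word_dual_block.
Qed.

Lemma hd_lhs_word n a b : (1 <= n)%nat -> hd false (index_word (lhs_args n a b)) = true.
Proof. intros Hn. rewrite index_word_lhs. now destruct n; [lia|]. Qed.

Lemma last_lhs_word n a b : (1 <= n)%nat -> last (index_word (lhs_args n a b)) true = false.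
Proof.
  intros Hn. rewrite index_word_lhs. destruct n as [|n]; [lia|].
  rewrite seq_S, flat_map_app. cbn [flat_map]. rewrite app_nil_r. unfold block.
  change (repeat false (S (b (1 + n)%nat))) with (false :: repeat false (b (1 + n)%nat)).
  now rewrite repeat_cons, !app_assoc, last_last.
Qed.

Lemma block_args_ge_1 (c d : nat -> nat) (L : list nat) :
  List.Forall (fun s => (1 <= s)%nat) (flat_map (fun j => (c j + 2)%nat :: repeat 1%nat (d j)) L).
Proof.
  apply Forall_flat_map, Forall_forall; intros j _. constructor; [lia|].
  apply Forall_forall; intros s Hs. apply repeat_spec in Hs. lia.
Qed.

Theorem corollary3p2 (q : R) (n : nat) (a b : nat -> nat) :
  0 < q < 1 -> (1 <= n)%nat ->
  qzeta q (lhs_args n a b) = qzeta q (rhs_args n a b).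
Proof.
  intros Hq Hn.
  rewrite !qzeta_weight by (exact Hq || apply block_args_ge_1).
  rewrite <- word_dual_lhs. apply Lim_seq_eq_of_vanishing_diff.
  - apply ex_lim_seq_incr; intros M. cbn [sum_lt].
    pose proof (weight_nonneg q Hq (index_word (lhs_args n a b)) M). lra.
  - apply (sum_weight_dual_lim q Hq); [apply hd_lhs_word | apply last_lhs_word]; exact Hn.
Qed.
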